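(* Let $M\subset E^n$ be an $r$-helix hypersurface and let $H\subset\mathbb{R}^n$ be its subspace of helix directions. Let $\alpha: I\subset\mathbb{R}\to M$ be a unit speed (arc-length parametrized) geodesic curve on $M$. Then the tangent indicatrix $\alpha'(s)$ of $\alpha$, regarded as a curve on the unit hypersphere $S^{n-1}\subset E^n$, is a spherical helix (general helix) with respect to any helix direction $d\in H$.
   Context: $E^n$ denotes $\mathbb{R}^n$ with the standard inner product $\langle X,Y\rangle=\sum x_iy_i$. A hypersurface $M\subset\mathbb{R}^n$ with unit normal field $\xi$ is a helix with respect to a fixed unit direction $d$ if the angle between $d$ and $T_qM$ is the same for all $q\in M$, equivalently $\langle d,\xi\rangle$ is constant on $M$. $M$ is an $r$-helix if there is a linear subspace $H\subset\mathbb{R}^n$ with $\dim H=r$ such that $M$ is a helix with respect to every direction $d\in H$; $H$ is the subspace of helix directions. A curve $\alpha$ on $M$ is a geodesic if $\alpha''$ is normal to $M$ at every point. Curves are assumed regular with nonvanishing curvatures, so that they have a Frenet frame $\{V_1,\dots,V_n\}$ with $V_1'=k_1V_2$, $V_i'=-k_{i-1}V_{i-1}+k_iV_{i+1}$. A curve is a general helix with respect to a fixed direction $d$ if its unit tangent vector makes a constant angle with $d$; a spherical helix is a general helix lying on $S^{n-1}$. *)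

(* Euclidean space E^{n+1} = 'rV[R]_n.+1. *)
From HB Require Import structures.
From mathcomp Require Import all_boot all_order all_algebra.
From mathcomp Require Import all_classical all_reals all_analysis.
Set Implicit Arguments. Unset Strict Implicit. Unset Printing Implicit Defensive.
Import Order.TTheory GRing.Theory Num.Theory.
Import numFieldNormedType.Exports.
Local Open Scope classical_set_scope.
Local Open Scope ring_scope.

Definition edot (R : realType) (n : nat) (u v : 'rV[R]_n) : R :=
  \sum_(i < n) u ord0 i * v ord0 i.

Definition enorm (R : realType) (n : nat) (u : 'rV[R]_n) : R :=
  Num.sqrt (edot u u).

Definition tangent_space (R : realType) (n : nat) (M : set 'rV[R]_n)
  (q : 'rV[R]_n) : set 'rV[R]_n :=
  [set v | exists gam : R -> 'rV[R]_n,
     [/\ gam 0 = q, derivable gam 0 1, (\forall t \near 0, M (gam t))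
       & 'D_1 gam 0 = v]].

Definition normal_to (R : realType) (n : nat) (M : set 'rV[R]_n)
  (q v : 'rV[R]_n) : Prop :=
  forall w, tangent_space M q w -> edot v w = 0.

Definition hypersurface (R : realType) (n : nat) (M : set 'rV[R]_n.+1) : Prop :=
  forall q, M q ->
  exists (U : set 'rV[R]_n) (phi : 'rV[R]_n -> 'rV[R]_n.+1)
         (V : set 'rV[R]_n.+1),
  [/\ open U /\ open V /\ V q,
      (forall u, U u -> differentiable phi u /\
                        (forall v, 'd phi u v = 0 -> v = 0)),
      (forall u1 u2, U u1 -> U u2 -> phi u1 = phi u2 -> u1 = u2),
      phi @` U = M `&` V &
      (* continuity of the inverse chart *)
      (forall u, U u -> forall e : R, 0 < e -> exists2 d : R, 0 < d &
         forall u', U u' -> `|phi u' - phi u| < d -> `|u' - u| < e)].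

Definition unit_normal_field (R : realType) (n : nat) (M : set 'rV[R]_n)
  (xi : 'rV[R]_n -> 'rV[R]_n) : Prop :=
  {within M, continuous xi} /\
  (forall q, M q -> edot (xi q) (xi q) = 1 /\ normal_to M q (xi q)).

Definition helix_wrt (R : realType) (n : nat) (M : set 'rV[R]_n)
  (xi : 'rV[R]_n -> 'rV[R]_n) (d : 'rV[R]_n) : Prop :=
  exists c : R, forall q, M q -> edot d (xi q) = c.

(* H (the row space of the matrix H) is an r-dimensional subspace all of whose
   unit directions are helix directions of M *)
Definition r_helix_subspace (R : realType) (n : nat) (M : set 'rV[R]_n)
  (xi : 'rV[R]_n -> 'rV[R]_n) (H : 'M[R]_n) (r : nat) : Prop :=
  \rank H = r /\
  (forall d : 'rV[R]_n, (d <= H)%MS -> edot d d = 1 -> helix_wrt M xi d).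

Definition unit_speed_geodesic (R : realType) (n : nat) (M : set 'rV[R]_n)
  (alpha : R -> 'rV[R]_n) (I : set R) : Prop :=
  (forall s, I s ->
     [/\ M (alpha s), derivable alpha s 1 /\
         derivable (fun t => 'D_1 alpha t) s 1,
         edot ('D_1 alpha s) ('D_1 alpha s) = 1,
         normal_to M (alpha s) ('D_1 (fun t => 'D_1 alpha t) s) &
         'D_1 (fun t => 'D_1 alpha t) s != 0]) /\
  {within I, continuous (fun s => 'D_1 (fun t => 'D_1 alpha t) s)}.

Definition general_helix (R : realType) (n : nat) (beta : R -> 'rV[R]_n)
  (I : set R) (d : 'rV[R]_n) : Prop :=
  (forall s, I s -> derivable beta s 1 /\ 'D_1 beta s != 0) /\
  exists c : R, forall s, I s ->
    edot ((enorm ('D_1 beta s))^-1 *: 'D_1 beta s) d = c.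

Definition spherical_helix (R : realType) (n : nat) (beta : R -> 'rV[R]_n)
  (I : set R) (d : 'rV[R]_n) : Prop :=
  (forall s, I s -> edot (beta s) (beta s) = 1) /\ general_helix beta I d.

(** The acceleration [alpha''] of a geodesic is normal to M, and the normal
  line of a hypersurface is spanned by its unit normal [xi] (the differential
  of a chart is injective), so [alpha'' = lam *: xi] with [lam] nonvanishing.
  If [<d, xi> = c] on M, the unit tangent [alpha''/|alpha''|] of the curve
  [alpha'] therefore has inner product [sg(lam) * c] with [d]. For [c != 0]
  the continuous function [<alpha'', d> = lam * c] has no zero, so by the
  intermediate value theorem [lam] keeps a constant sign. *)
From HB Require Import structures.
From mathcomp Require Import all_boot all_order all_algebra.
From mathcomp Require Import all_classical all_reals all_analysis.
Import Order.TTheory GRing.Theory Num.Theory.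
Import numFieldNormedType.Exports.
Local Open Scope classical_set_scope.
Local Open Scope ring_scope.
Set Implicit Arguments.
Unset Strict Implicit.

Section EuclideanInnerProduct.
Variables (R : realType) (m : nat).
Implicit Types u v w : 'rV[R]_m.

Lemma edotC u v : edot u v = edot v u.
Proof. by apply: eq_bigr => i _; rewrite mulrC. Qed.

Lemma edotDl u v w : edot (u + v) w = edot u w + edot v w.
Proof. by rewrite /edot -big_split; apply: eq_bigr => i _; rewrite mxE mulrDl. Qed.

Lemma edotBl u v w : edot (u - v) w = edot u w - edot v w.
Proof. by rewrite /edot -sumrB; apply: eq_bigr => i _; rewrite !mxE mulrBl. Qed.

Lemma edotZl (k : R) u v : edot (k *: u) v = k * edot u v.
Proof. by rewrite /edot mulr_sumr; apply: eq_bigr => i _; rewrite mxE mulrA. Qed.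

Lemma edot_self_eq0 u : edot u u = 0 -> u = 0.
Proof.
move=> /eqP; rewrite /edot psumr_eq0 => [/allP u0|i _]; last first.
  by rewrite -expr2 sqr_ge0.
apply/rowP => i; rewrite mxE.
by have := u0 i (mem_index_enum _); rewrite mulf_eq0 orbb => /eqP.
Qed.

Lemma enormZ_unit (k : R) u : edot u u = 1 -> enorm (k *: u) = `|k|.
Proof.
by move=> uu; rewrite /enorm edotZl edotC edotZl uu mulr1 -expr2 sqrtr_sqr.
Qed.

Lemma cvg_edotl (T : Type) (F : set_system T) (FF : Filter F)
    (f : T -> 'rV[R]_m) (l v : 'rV[R]_m) :
  f x @[x --> F] --> l -> edot (f x) v @[x --> F] --> edot l v.
Proof.
move=> fl; rewrite /edot; elim: (index_enum _) => [|i s IH].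
  by under eq_fun do rewrite big_nil; rewrite big_nil; exact: cvg_cst.
under eq_fun do rewrite big_cons; rewrite big_cons.
apply: cvgD IH; apply: cvgMr_tmp.
exact: cvg_comp fl (@coord_continuous R _ _ ord0 i l).
Qed.

End EuclideanInnerProduct.

(* [w := v - <v, x> x] lies in the row space of the invertible matrix with
   rows [L e_1, ..., L e_n, x], and is orthogonal to all of its rows. *)
Lemma orthogonal_range_colinear (R : realType) (n : nat)
    (L : {linear 'rV[R]_n -> 'rV[R]_n.+1}) (x v : 'rV[R]_n.+1) :
  (forall y, L y = 0 -> y = 0) -> edot x x = 1 ->
  (forall y, edot x (L y) = 0) -> (forall y, edot v (L y) = 0) ->
  v = edot v x *: x.
Proof.
move=> L_inj xx xL vL.
pose A : 'M[R]_(n + 1, n.+1) := col_mx (lin1_mx L) x.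
have mulA (u : 'rV_(n + 1)) : u *m A = L (lsubmx u) + rsubmx u 0 0 *: x.
  rewrite -{1}(hsubmxK u) mul_row_col mul_rV_lin1.
  by rewrite {1}[rsubmx u]mx11_scalar mul_scalar_mx.
have A_inj (u : 'rV_(n + 1)) : u *m A = 0 -> u = 0.
  rewrite mulA => uA0.
  have ur0 : rsubmx u 0 0 = 0.
    have := congr1 (fun z => edot z x) uA0.
    rewrite edotDl edotZl edotC xL xx add0r mulr1 => ->.
    by rewrite /edot big1 // => i _; rewrite mxE mul0r.
  move: uA0; rewrite ur0 scale0r addr0 => /L_inj ul0.
  rewrite -(hsubmxK u) ul0.
  have -> : rsubmx u = 0 by apply/rowP => i; rewrite ord1 [RHS]mxE.
  by rewrite row_mx0.
have A_full : row_full A.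
  suff : row_free A by rewrite /row_full /row_free => /eqP ->; rewrite addn1.
  rewrite -kermx_eq0 -submx0; apply/row_subP => i.
  by have /sub_kermxP/A_inj -> := row_sub i (kermx A); exact: sub0mx.
set w := v - edot v x *: x.
have [y wy] := submxP (submx_full w A_full).
have wL z : edot (L z) w = 0.
  by rewrite edotC /w edotBl edotZl vL xL mulr0 subr0.
have wx : edot x w = 0 by rewrite edotC /w edotBl edotZl xx mulr1 subrr.
apply/eqP; rewrite -subr_eq0 -/w; apply/eqP; apply: edot_self_eq0.
by rewrite {1}wy mulA edotDl edotZl wL wx mulr0 addr0.
Qed.

Lemma chart_diff_tangent (R : realType) (n : nat) (M : set 'rV[R]_n.+1)
    (U : set 'rV[R]_n) (phi : 'rV[R]_n -> 'rV[R]_n.+1) (u0 y : 'rV[R]_n) :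
  open U -> U u0 -> differentiable phi u0 -> phi @` U `<=` M ->
  tangent_space M (phi u0) ('d phi u0 y).
Proof.
move=> oU Uu0 dphi UM.
pose gam t := phi (t *: y + u0).
have quotE : (fun h : R => h^-1 *: ((gam \o shift 0) (h *: 1) - gam 0)) =
             (fun h : R => h^-1 *: ((phi \o shift u0) (h *: y) - phi u0)).
  apply: funext => h /=; rewrite /gam /shift /= scale0r add0r addr0.
  by rewrite [h *: 1]mulr1.
exists gam; split.
- by rewrite /gam scale0r add0r.
- by rewrite /derivable quotE; exact: diff_derivable.
- have line_cvg : (fun t : R => t *: y + u0) @ 0 --> u0.
    suff : (fun t : R => t *: y + u0) @ 0 --> 0 *: y + u0.
      by rewrite scale0r add0r.
    by apply: cvgD; [exact: cvgZr_tmp cvg_id | exact: cvg_cst].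
  have U_nbhs : nbhs u0 U by apply: (@open_nbhs_nbhs _ u0 U); split.
  near=> t; apply: UM; exists (t *: y + u0) => //.
  by near: t; exact: line_cvg U_nbhs.
- by rewrite /derive quotE -deriveE.
Unshelve. all: by end_near. Qed.

Lemma normal_to_unit_normalE (R : realType) (n : nat) (M : set 'rV[R]_n.+1)
    (xi : 'rV[R]_n.+1 -> 'rV[R]_n.+1) (q v : 'rV[R]_n.+1) :
  hypersurface M -> unit_normal_field M xi -> M q -> normal_to M q v ->
  v = edot v (xi q) *: xi q.
Proof.
move=> hM [_ xi_unit] Mq v_normal.
have [U [phi [V [[oU [_ Vq]] phi_imm _ phiU _]]]] := hM q Mq.
have [u0 Uu0 phi_u0] : (phi @` U) q by rewrite phiU.
subst q.
have UM : phi @` U `<=` M by rewrite phiU; exact: subIsetl.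
have [dphi dphi_inj] := phi_imm u0 Uu0.
have [xixi xi_normal] := xi_unit _ Mq.
apply: (orthogonal_range_colinear (L := 'd phi u0)) => // y.
- by apply: xi_normal; apply: chart_diff_tangent oU Uu0 dphi UM.
- by apply: v_normal; apply: chart_diff_tangent oU Uu0 dphi UM.
Qed.

Lemma mulr_lt0_min_max (R : realDomainType) (u v : R) :
  u * v < 0 -> Num.min u v <= 0 <= Num.max u v.
Proof.
move=> uv_lt0; rewrite ge_min le_max.
have [u_lt0|u_ge0] := ltP u 0.
  move: uv_lt0; rewrite (nmulr_rlt0 _ u_lt0) => v_gt0.
  by rewrite (ltW u_lt0) (ltW v_gt0) orbT.
have u_gt0 : 0 < u.
  by rewrite lt0r u_ge0 andbT; apply: contraTneq uv_lt0 => ->; rewrite mul0r ltxx.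
move: uv_lt0; rewrite (pmulr_rlt0 _ u_gt0) => v_lt0.
by rewrite (ltW v_lt0) orbT.
Qed.

Lemma continuous_neq0_sgr_eq (R : realType) (f : R -> R) (a b : R) :
  {in `]a, b[, continuous f} -> {in `]a, b[, forall x, f x != 0} ->
  {in `]a, b[ &, forall x y, Num.sg (f x) = Num.sg (f y)}.
Proof.
move=> f_cont f_neq0 x y xI yI.
wlog xy : x y xI yI / x <= y.
  by move=> sg_eq; have [|/ltW yx] := leP x y; [exact: sg_eq | exact/esym/sg_eq].
have sub_xy : {subset `[x, y] <= `]a, b[}.
  move: xI yI; rewrite !in_itv /= => /andP[ax _] /andP[_ yb] z.
  by rewrite !in_itv /= => /andP[xz zy]; rewrite (lt_le_trans ax) ?(le_lt_trans zy).
have f_cont_xy : {within `[x, y], continuous f}.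
  by apply: continuous_in_subspaceT => z /[!inE] /sub_xy/f_cont.
have fxy_gt0 : 0 < f x * f y.
  rewrite ltNge; apply/negP => fxy_le0.
  have fxy_lt0 : f x * f y < 0 by rewrite lt_neqAle fxy_le0 mulf_neq0 ?f_neq0.
  have [z /sub_xy zI fz0] := IVT xy f_cont_xy (mulr_lt0_min_max fxy_lt0).
  by move/eqP: (f_neq0 z zI); rewrite fz0.
have sgx2 : Num.sg (f x) ^+ 2 = 1 by rewrite sqr_sg f_neq0.
by rewrite -[RHS]mul1r -sgx2 expr2 -mulrA -sgrM (gtr0_sg fxy_gt0) mulr1.
Qed.

Section UnitSpeedGeodesic.
Variables (R : realType) (n : nat) (M : set 'rV[R]_n.+1).
Variables (xi : 'rV[R]_n.+1 -> 'rV[R]_n.+1) (alpha : R -> 'rV[R]_n.+1).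
Variable I : set R.
Hypotheses (M_hyp : hypersurface M) (xi_normal : unit_normal_field M xi).
Hypothesis alpha_geo : unit_speed_geodesic M alpha I.

Local Notation acc s := ('D_1 (fun t => 'D_1 alpha t) s).

Lemma geodesic_accE s : I s -> acc s = edot (acc s) (xi (alpha s)) *: xi (alpha s).
Proof.
move=> sI; have [alpha_M _ _ acc_normal _] := alpha_geo.1 s sI.
exact: normal_to_unit_normalE M_hyp xi_normal alpha_M acc_normal.
Qed.

Lemma geodesic_acc_normal_neq0 s : I s -> edot (acc s) (xi (alpha s)) != 0.
Proof.
move=> sI; have [_ _ _ _ acc_neq0] := alpha_geo.1 s sI.
by apply: contraNneq acc_neq0 => lam0; rewrite geodesic_accE // lam0 scale0r.
Qed.

Variables (d : 'rV[R]_n.+1) (c : R).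
Hypothesis d_helix : forall q, M q -> edot d (xi q) = c.

Lemma geodesic_acc_dotE s : I s -> edot (acc s) d = edot (acc s) (xi (alpha s)) * c.
Proof.
move=> sI; have [alpha_M _ _ _ _] := alpha_geo.1 s sI.
by rewrite {1}geodesic_accE // edotZl (edotC (xi _)) d_helix.
Qed.

Lemma geodesic_unit_acc_dot s : I s ->
  edot ((enorm (acc s))^-1 *: acc s) d = `|c| * Num.sg (edot (acc s) d).
Proof.
move=> sI; have [alpha_M _ _ _ _] := alpha_geo.1 s sI.
have [xi_unit _] := xi_normal.2 _ alpha_M.
have lam_neq0 := geodesic_acc_normal_neq0 sI.
rewrite edotZl geodesic_acc_dotE // {1}geodesic_accE // enormZ_unit //.
set lam := edot (acc s) (xi (alpha s)).
rewrite sgrM [RHS]mulrCA [`|c| * _]mulrC -numEsg mulrA; congr (_ * c).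
by rewrite {2}(numEsg lam) mulrCA mulVf ?mulr1 ?normr_eq0.
Qed.

End UnitSpeedGeodesic.

Theorem theorem3p1 (R : realType) (n r : nat) (M : set 'rV[R]_n.+1)
  (xi : 'rV[R]_n.+1 -> 'rV[R]_n.+1) (H : 'M[R]_n.+1)
  (a b : R) (alpha : R -> 'rV[R]_n.+1) :
  hypersurface M ->
  unit_normal_field M xi ->
  r_helix_subspace M xi H r ->
  a < b ->
  unit_speed_geodesic M alpha `]a, b[ ->
  forall d : 'rV[R]_n.+1, (d <= H)%MS -> edot d d = 1 ->
    spherical_helix (fun s => 'D_1 alpha s) `]a, b[ d.
Proof.
move=> M_hyp xi_normal [_ helix_dirs] ab alpha_geo d dH dd.
have [c d_helix] := helix_dirs d dH dd.
have acc_cont : {in `]a, b[, continuous ('D_1 ('D_1 alpha))}.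
  move=> t tI; have := alpha_geo.2.
  rewrite continuous_open_subspace; last exact: itv_open.
  by apply; rewrite inE.
split; first by move=> s /(alpha_geo.1 s) [].
split; first by move=> s /(alpha_geo.1 s) [_ [_ ?] _ _ ?].
exists (`|c| * Num.sg (edot ('D_1 ('D_1 alpha) ((a + b) / 2)) d)) => s sI.
rewrite (geodesic_unit_acc_dot M_hyp xi_normal alpha_geo d_helix sI).
(* Goals comparing the two sides must not be closed by conversion (as [congr]
   or an unrestricted [rewrite mul0r] attempt): it unfolds the derivatives. *)
have [c0|c_neq0] := eqVneq c 0.
  by rewrite c0 normr0 [LHS]mul0r [RHS]mul0r.
apply: congr1.
apply: (continuous_neq0_sgr_eq (f := fun s => edot ('D_1 ('D_1 alpha) s) d))
  sI (mid_in_itvoo ab).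
- by move=> t /acc_cont; exact: cvg_edotl.
- move=> t tI; rewrite (geodesic_acc_dotE M_hyp xi_normal alpha_geo d_helix tI).
  by rewrite mulf_neq0 ?(geodesic_acc_normal_neq0 M_hyp xi_normal alpha_geo tI).
Qed.
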